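(* Let $\mathbf{k}$ be an algebraically closed field, $V=\mathbf{k}^n$, $G=\mathrm{GL}(V)$, $\underline{G}=G\ltimes V$. Let $(X,w)\in\mathcal{O}_{\lambda[q]}$ with $\lambda=(a_1\ge\dots\ge a_t>0)$. For $k\in\{0,1,\dots,t\}$, the enhanced number $\wp_k^{\lambda[q]}$ equals the maximum of $\dim\big(\mathbf{k}[X]\tilde w+\mathbf{k}[X]\nu_1+\dots+\mathbf{k}[X]\nu_k\big)$ as $\tilde w$ ranges over $w+\mathrm{im}\,X$ and $(\nu_1,\dots,\nu_k)$ ranges over $V^k$.
   Context: $\underline{G}$ is $G\times V$ with product $(g_1,v_1)(g_2,v_2)=(g_1g_2,g_1v_2+v_1)$ and adjoint action $\mathrm{Ad}(g,v)(X,w)=(gXg^{-1},-(gXg^{-1})v+gw)$. Write $\lambda=(b_1^{d_1}\cdots b_r^{d_r})$ with $b_1>\dots>b_r$ (each $b_i$ occurring $d_i>0$ times), $d_0=0$; an enhanced partition $\lambda[q]$ has $q\in\{d_0+\dots+d_{j-1}:1\le j\le r+1\}$. For a nilpotent of type $\lambda$ with Jordan basis $\{X^kv_i:1\le i\le t, 0\le k\le a_i-1\}$, $X^{a_i}v_i=0$, put $u_j=v_{d_1+\dots+d_j}$ ($1\le j\le r$), $u_{r+1}=0$; $\mathcal{O}_{\lambda[q]}$ is the $\underline{G}$-orbit of $(X,u_j)$ with $q=d_0+\dots+d_{j-1}$. With the convention $a_i=0$ for $i>t$, the enhanced number is $\wp_k^{\lambda[q]}=\sum_{i=1}^k a_i+\delta_{k+1,q}$,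 where $\delta_{k+1,q}=a_{k+1}$ if $k+1>q$ and $\delta_{k+1,q}=a_{k+1}-1$ otherwise. $\mathbf{k}[X]u$ denotes the span of $u,Xu,X^2u,\dots$. *)

From HB Require Import structures.
From mathcomp Require Import all_boot all_order all_algebra.
Set Implicit Arguments. Unset Strict Implicit. Unset Printing Implicit Defensive.
Import GRing.Theory.
Local Open Scope ring_scope.

(* A partition lambda = (a_1 >= ... >= a_t > 0) is a seq nat; a_i is 1-indexed,
   with a_i = 0 for i > t (and i = 0 unused). *)
Definition lam_a (lam : seq nat) (i : nat) : nat := nth 0%N lam i.-1.

Definition is_partition (lam : seq nat) : bool :=
  sorted geq lam && all (fun a => 0 < a)%N lam.

(* lambda = (b_1^{d_1} ... b_r^{d_r}) with b_1 > ... > b_r : b = undup lam. *)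
Definition lam_r (lam : seq nat) : nat := size (undup lam).
Definition lam_b (lam : seq nat) (i : nat) : nat := nth 0%N (undup lam) i.-1.
Definition lam_d (lam : seq nat) (i : nat) : nat :=
  if i == 0%N then 0%N else count_mem (lam_b lam i) lam.
Definition lam_s (lam : seq nat) (j : nat) : nat := (\sum_(0 <= i < j.+1) lam_d lam i)%N.

Definition enhanced_index (lam : seq nat) (q j : nat) : bool :=
  [&& (1 <= j)%N, (j <= lam_r lam + 1)%N & q == lam_s lam j.-1].

Section Lin.
Variables (F : fieldType) (n : nat).

Definition jordan_seq (X : 'M[F]_n) (lam : seq nat) (v : nat -> 'cV[F]_n)
  : seq 'cV[F]_n :=
  flatten [seq [seq X ^+ k *m v i | k <- iota 0 (lam_a lam i)] | i <- iota 1 (size lam)].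

Definition is_jordan_basis (X : 'M[F]_n) (lam : seq nat) (v : nat -> 'cV[F]_n) : Prop :=
  basis_of fullv (jordan_seq X lam v) /\
  (forall i, (1 <= i <= size lam)%N -> X ^+ (lam_a lam i) *m v i = 0).

Definition u_vec (lam : seq nat) (v : nat -> 'cV[F]_n) (j : nat) : 'cV[F]_n :=
  if (j <= lam_r lam)%N then v (lam_s lam j) else 0.

Definition Ad (g : 'M[F]_n) (v : 'cV[F]_n) (Xw : 'M[F]_n * 'cV[F]_n)
  : 'M[F]_n * 'cV[F]_n :=
  let X' := g *m Xw.1 *m invmx g in (X', - (X' *m v) + g *m Xw.2).

Definition in_enh_orbit (lam : seq nat) (q : nat) (X : 'M[F]_n) (w : 'cV[F]_n) : Prop :=
  exists (X0 : 'M[F]_n) (v0 : nat -> 'cV[F]_n) (j : nat) (g : 'M[F]_n) (v : 'cV[F]_n),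
    [/\ is_jordan_basis X0 lam v0, enhanced_index lam q j, g \in unitmx &
        (X, w) = Ad g v (X0, u_vec lam v0 j)].

(* k[X]u = span of u, Xu, X^2u, ... (powers X^m, m >= n, vanish as X is nilpotent;
   we take m < n) *)
Definition kX_span (X : 'M[F]_n) (u : 'cV[F]_n) : {vspace 'cV[F]_n} :=
  span [seq X ^+ m *m u | m <- iota 0 n].

End Lin.

Definition enh_num (lam : seq nat) (q k : nat) : nat :=
  ((\sum_(1 <= i < k.+1) lam_a lam i) +
   (if (q < k.+1)%N then lam_a lam k.+1 else (lam_a lam k.+1 - 1)))%N.

(* Conjugating by g reduces everything to a Jordan basis v of X with w = u_j, the
   generator of the last block of the j-th group of equal parts.  Put p = a_(k+1).
   The image of X^p has dimension sum_(i<=k) (a_i - p), and every k[X]nu lies in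
   span(nu, ..., X^(p-1) nu) + im X^p; the same holds for k[X](u_j + X y), with one
   power fewer when q > k, since u_j then spans a block of size < p.  This gives
   the upper bound.  It is attained by taking for the nu_i generators of blocks
   1, ..., k+1, skipping the block of u_j, when q <= k (u_j then sits in a block of
   size a_(k+1)), and, when q > k, by taking nu_i = v_i (i <= k) and
   w~ = u_j + X v_(k+1), which modulo the other blocks produces X v_(k+1), ...,
   X^(a_(k+1)-1) v_(k+1). *)

From HB Require Import structures.
From mathcomp Require Import all_boot all_order all_algebra all_field.
From mathcomp Require Import zify.
Set Implicit Arguments. Unset Strict Implicit. Unset Printing Implicit Defensive.
Import GRing.Theory.
Local Open Scope ring_scope.

Lemma geq_trans : transitive geq.
Proof. by move=> y x z /= le_xy le_zx; apply: leq_trans le_zx le_xy. Qed.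

Lemma leq_nth_count (s : seq nat) c i : sorted geq s -> (0 < c)%N ->
  (c <= nth 0 s i)%N = (i < count (leq c) s)%N.
Proof.
move=> + c_gt0; elim: s i => [|x s IHs] i s_sorted /=.
  by rewrite nth_nil leqNgt c_gt0.
have [le_cx | lt_xc] := leqP c x.
  by case: i => [|i] /=; rewrite ?le_cx ?IHs ?(path_sorted s_sorted).
have count0 : count (leq c) s = 0%N.
  apply/eqP; rewrite -leqn0 leqNgt -has_count; apply/hasPn => y s_y /=.
  rewrite -ltnNge (leq_ltn_trans _ lt_xc) //.
  exact: (allP (order_path_min geq_trans s_sorted)).
rewrite count0 addn0 ltn0; case: i => [|i] /=; first by rewrite leqNgt lt_xc.
by rewrite IHs ?count0 ?(path_sorted s_sorted).
Qed.

Lemma count_leqS (s : seq nat) c : count (leq c) s = (count (leq c.+1) s + count_mem c s)%N.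
Proof. by elim: s => //= x s ->; case: ltngtP => //= _; rewrite addnCA. Qed.

Section PartitionCombinatorics.
Variable lam : seq nat.

Local Notation a := (lam_a lam).
Local Notation t := (size lam).
Local Notation b := (lam_b lam).
Local Notation r := (lam_r lam).
Local Notation s := (lam_s lam).

Lemma lam_a_eq0 i : (t < i)%N -> a i = 0%N.
Proof. by move=> lt_ti; rewrite /lam_a nth_default //; lia. Qed.

Lemma sum_lam_a_prefix K :
  (\sum_(1 <= i < t.+1 | i < K) a i = \sum_(1 <= i < K) a i)%N.
Proof.
have [le_Kt | lt_tK] := leqP K t.+1.
  by rewrite [RHS](big_nat_widen _ _ _ _ _ le_Kt).
have tail0 : (\sum_(t.+1 <= i < K) a i = 0)%N.
  by rewrite big_nat_cond big1 // => i /andP[/andP[lt_ti _] _]; apply: lam_a_eq0.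
rewrite [RHS](big_cat_nat _ (n := t.+1)) //= ?(ltnW lt_tK) // tail0 addn0.
by rewrite big_mkcond; apply: eq_big_nat => i /andP[_ lt_it]; rewrite (ltn_trans lt_it lt_tK).
Qed.

Lemma sum_lam_a_prefix_add K M : (0 < K <= M)%N ->
  (\sum_(1 <= i < t.+1 | (i < K) || (i == M)) a i = \sum_(1 <= i < K) a i + a M)%N.
Proof.
case/andP=> K_gt0 le_KM; rewrite big_mkcond.
rewrite (eq_bigr (fun i => (if i < K then a i else 0) + (if i == M then a i else 0))%N).
  rewrite big_split -!big_mkcond /= sum_lam_a_prefix big_nat1_eq.
  by case: ifP => // /negbT M_out; rewrite lam_a_eq0 //; lia.
move=> i _; case: ltnP => [lt_iK | //].
by rewrite /= (ltn_eqF (leq_trans lt_iK le_KM)) addn0.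
Qed.

Lemma lam_s_succ j : s j.+1 = (s j + count_mem (b j.+1) lam)%N.
Proof. by rewrite /lam_s big_nat_recr. Qed.

Lemma lam_s_take j : (j <= r)%N -> s j = count (mem (take j (undup lam))) lam.
Proof.
rewrite /lam_r; elim: j => [|j IHj] le_jr; first by rewrite /lam_s big_nat1 take0 count_pred0.
rewrite lam_s_succ IHj ?(ltnW le_jr) // (take_nth 0%N) // -cats1 -count_predUI.
have b_new : nth 0%N (undup lam) j \notin take j (undup lam).
  by rewrite in_take_leq ?index_uniq ?undup_uniq ?ltnn // ltnW.
have -> : count (predI (mem (take j (undup lam))) (pred1 (b j.+1))) lam = 0%N.
  rewrite -(count_pred0 lam); apply: eq_count => x /=.
  by case: eqP => [->|]; rewrite ?andbF ?(negbTE b_new).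
by rewrite addn0; apply: eq_count => x; rewrite /= mem_cat mem_seq1.
Qed.

Lemma lam_s_size : s r = t.
Proof.
rewrite lam_s_take // take_size -count_predT.
by apply: eq_in_count => x /= lam_x; rewrite mem_undup.
Qed.

Lemma lam_s_le_size j : (j <= r)%N -> (s j <= t)%N.
Proof. by move=> le_jr; rewrite lam_s_take // count_size. Qed.

Hypothesis lam_partition : is_partition lam.

Lemma lam_sorted : sorted geq lam.
Proof. by case/andP: lam_partition. Qed.

Lemma lam_a_gt0 i : (0 < i <= t)%N -> (0 < a i)%N.
Proof.
move=> i_t; have lt_it : (i.-1 < t)%N by lia.
by case/andP: lam_partition => _ /allP; apply; apply: mem_nth.
Qed.

Lemma leq_lam_aE c i : (0 < c)%N -> (c <= a i.+1)%N = (i < count (leq c) lam)%N.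
Proof. exact: leq_nth_count lam_sorted. Qed.

Lemma lam_a_nonincr i j : (0 < i <= j)%N -> (a j <= a i)%N.
Proof.
case: i => // i; case: j => // j /= le_ij.
have [->//|aj_gt0] := posnP (a j.+1).
by rewrite leq_lam_aE //; apply: (@leq_ltn_trans j) => //; rewrite -leq_lam_aE.
Qed.

Lemma lam_b_mem j : (0 < j <= r)%N -> b j \in lam.
Proof.
by move=> j_r; rewrite /lam_b -mem_undup; apply: mem_nth; rewrite /lam_r in j_r; lia.
Qed.

Lemma lam_b_gt0 j : (0 < j <= r)%N -> (0 < b j)%N.
Proof. by move=> j_r; case/andP: lam_partition => _ /allP; apply; apply: lam_b_mem. Qed.

Lemma lam_s_geq j : (0 < j <= r)%N -> s j = count (leq (b j)) lam.
Proof.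
case/andP=> j_gt0 le_jr; rewrite lam_s_take //; apply: eq_in_count => x lam_x /=.
set bs := undup lam; have x_bs : x \in bs by rewrite mem_undup.
have bs_sorted : sorted geq bs := subseq_sorted geq_trans (undup_subseq lam) lam_sorted.
have nth_mono := sorted_leq_nth geq_trans leqnn 0%N bs_sorted.
have lt_x_bs : (index x bs < size bs)%N by rewrite index_mem.
have lt_j_bs : (j.-1 < size bs)%N by rewrite /bs -/(lam_r lam); lia.
rewrite in_take // /lam_b -[in RHS](nth_index 0%N x_bs).
have [lt_xj | le_jx] := ltnP (index x bs) j.
  by symmetry; apply: nth_mono; rewrite ?inE //; lia.
have le_x_b : (nth 0%N bs (index x bs) <= nth 0%N bs j.-1)%N.
  by apply: nth_mono; rewrite ?inE //; lia.
symmetry; apply/negbTE; rewrite -ltnNge ltn_neqAle nth_uniq ?undup_uniq // le_x_b andbT.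
lia.
Qed.

Lemma lam_s_pred j : (0 < j <= r)%N -> s j.-1 = count (leq (b j).+1) lam.
Proof.
move=> j_r; have := lam_s_succ j.-1; rewrite prednK; last by case/andP: j_r.
by rewrite lam_s_geq // count_leqS => /eqP; rewrite eqn_add2r => /eqP <-.
Qed.

Lemma lam_s_lt j : (0 < j <= r)%N -> (s j.-1 < s j)%N.
Proof.
move=> j_r; rewrite lam_s_pred // lam_s_geq // (count_leqS lam (b j)).
by rewrite -[X in (X < _)%N]addn0 ltn_add2l -has_count has_pred1 lam_b_mem.
Qed.

Lemma lam_a_block j i : (0 < j <= r)%N -> (s j.-1 < i <= s j)%N -> a i = b j.
Proof.
move=> j_r; case: i => [|i] /andP[lt_si le_is]; first by [].
have b_gt0 := lam_b_gt0 j_r.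
apply/eqP; rewrite eqn_leq leqNgt leq_lam_aE // -lam_s_pred // -leqNgt -ltnS lt_si /=.
by rewrite leq_lam_aE // -lam_s_geq.
Qed.

Lemma lam_a_gt_block j i : (0 < j <= r)%N -> (0 < i <= s j.-1)%N -> (b j < a i)%N.
Proof. by move=> j_r; case: i => // i /= le_is; rewrite leq_lam_aE // -lam_s_pred. Qed.

Lemma sum_lam_a_excess k : (k <= t)%N ->
  (\sum_(1 <= i < t.+1) (a i - a k.+1) + k * a k.+1 = \sum_(1 <= i < k.+1) a i)%N.
Proof.
move=> le_kt; have tail0 : (\sum_(k.+1 <= i < t.+1) (a i - a k.+1) = 0)%N.
  rewrite big_nat_cond big1 // => i /andP[/andP[lt_ki _] _].
  by apply/eqP; rewrite subn_eq0 lam_a_nonincr.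
rewrite (big_cat_nat _ (n := k.+1)) //= tail0 addn0.
have -> : (k * a k.+1 = \sum_(1 <= i < k.+1) a k.+1)%N by rewrite sum_nat_const_nat subn1.
rewrite -big_split /=; apply: eq_big_nat => i /andP[i_gt0 lt_ik].
by rewrite subnK // lam_a_nonincr // i_gt0 ltnW.
Qed.

(* u_j = v_(u_index j); the index t+1, a block of size 0, stands for u_(r+1) = 0. *)
Definition u_index j : nat := if (j <= r)%N then s j else t.+1.

Lemma u_index_bounds q j : enhanced_index lam q j -> (q < u_index j <= t.+1)%N.
Proof.
case/and3P=> j_gt0 le_jr1 /eqP->; rewrite /u_index; case: ifP => le_jr.
  by have := lam_s_lt (j := j); have := lam_s_le_size le_jr; rewrite j_gt0 le_jr; lia.
have -> : j.-1 = r by lia.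
by rewrite lam_s_size ltnSn.
Qed.

Lemma lam_a_u_index_lt q j i : enhanced_index lam q j -> (0 < i <= q)%N ->
  (a (u_index j) < a i)%N.
Proof.
case/and3P=> j_gt0 le_jr1 /eqP-> i_q; rewrite /u_index; case: ifP => le_jr.
  have j_r : (0 < j <= r)%N by rewrite j_gt0.
  by rewrite (@lam_a_block j) ?lam_a_gt_block //; have := lam_s_lt j_r; lia.
have jr : j.-1 = r by lia.
by rewrite lam_a_eq0 // lam_a_gt0 //; rewrite jr lam_s_size in i_q.
Qed.

Lemma lam_a_u_index_eq q j i : enhanced_index lam q j -> (q < i <= u_index j)%N ->
  a i = a (u_index j).
Proof.
case/and3P=> j_gt0 le_jr1 /eqP->; rewrite /u_index; case: ifP => le_jr i_q.
  have j_r : (0 < j <= r)%N by rewrite j_gt0.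
  by rewrite !(@lam_a_block j) //; have := lam_s_lt j_r; lia.
have jr : j.-1 = r by lia.
by rewrite jr lam_s_size in i_q; have -> : i = t.+1 by lia.
Qed.
End PartitionCombinatorics.

Lemma count_leq_iota p m : count (leq p) (iota 0 m) = (m - p)%N.
Proof.
elim: m => [//|m IHm]; rewrite -addn1 iotaD count_cat IHm /=.
by case: (leqP p m) => /= [le_pm|lt_mp]; lia.
Qed.

Lemma subseq_flatten_map (T : Type) (U : eqType) (f g : T -> seq U) (s : seq T) :
  (forall x, subseq (f x) (g x)) -> subseq (flatten (map f s)) (flatten (map g s)).
Proof. by move=> sub_fg; elim: s => //= x s IHs; apply: cat_subseq. Qed.

Lemma free_subseq (K : fieldType) (vT : vectType K) (X Y : seq vT) :
  free X -> subseq Y X -> free Y.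
Proof. by move=> freeX /(subseq_uniqP (free_uniq freeX)) ->; apply: filter_free. Qed.

Section KrylovSpaces.
Variables (F : fieldType) (n : nat) (X : 'M[F]_n).

Definition kX_sum k (w : 'cV[F]_n) (nu : 'I_k -> 'cV[F]_n) : {vspace 'cV[F]_n} :=
  (kX_span X w + \sum_(i < k) kX_span X (nu i))%VS.

Lemma mulmx_exprSr l (z : 'cV[F]_n) : X ^+ l *m (X *m z) = X ^+ l.+1 *m z.
Proof. by rewrite exprSr -mulmxE mulmxA. Qed.

Lemma mem_kX_span z l : (l < n)%N -> X ^+ l *m z \in kX_span X z.
Proof. by move=> lt_ln; apply/memv_span/map_f; rewrite mem_iota. Qed.

Lemma mem_kX_sumw k w (nu : 'I_k -> 'cV[F]_n) l :
  (l < n)%N -> X ^+ l *m w \in kX_sum w nu.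
Proof. by move=> lt_ln; apply: subvP (addvSl _ _) _ (mem_kX_span w lt_ln). Qed.

Lemma mem_kX_sumnu k w (nu : 'I_k -> 'cV[F]_n) i l :
  (l < n)%N -> X ^+ l *m nu i \in kX_sum w nu.
Proof.
move=> lt_ln; apply: subvP (mem_kX_span (nu i) lt_ln).
by apply: subv_trans (addvSr _ _); apply: (sumv_sup i).
Qed.

Lemma kX_span_trunc p z (U : {vspace 'cV[F]_n}) :
  (forall m, (p <= m)%N -> X ^+ m *m z \in U) ->
  (kX_span X z <= <<[seq X ^+ m *m z | m <- iota 0 p]>> + U)%VS.
Proof.
move=> zU; apply/span_subvP => _ /mapP[m _ ->].
have [lt_mp | le_pm] := ltnP m p; last by apply: subvP (addvSr _ _) _ (zU m le_pm).
by apply/(subvP (addvSl _ _))/memv_span/map_f; rewrite mem_iota.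
Qed.

Lemma dim_kX_sum_le k p p' w (nu : 'I_k -> 'cV[F]_n) (U : {vspace 'cV[F]_n}) :
  (forall m, (p' <= m)%N -> X ^+ m *m w \in U) ->
  (forall i m, (p <= m)%N -> X ^+ m *m nu i \in U) ->
  (\dim (kX_sum w nu) <= p' + k * p + \dim U)%N.
Proof.
move=> wU nuU; pose head (z : 'cV[F]_n) m := <<[seq X ^+ l *m z | l <- iota 0 m]>>%VS.
have dim_head z m : (\dim (head z m) <= m)%N.
  by apply: leq_trans (dim_span _) _; rewrite size_map size_iota.
have sub : (kX_sum w nu <= head w p' + \sum_(i < k) head (nu i) p + U)%VS.
  rewrite subv_add; apply/andP; split.
    by apply: subv_trans (kX_span_trunc wU) _; apply: addvS (addvSl _ _) (subvv U).
  apply/subv_sumP => i _; apply: subv_trans (kX_span_trunc (nuU i)) _.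
  by apply: addvS (subvv U); apply: subv_trans (addvSr _ _); apply: (sumv_sup i).
apply: leq_trans (dimvS sub) _; apply: leq_trans (dimv_add_leqif _ _).1 _.
rewrite leq_add2r; apply: leq_trans (dimv_add_leqif _ _).1 _; apply: leq_add => //.
apply: leq_trans (dimv_leq_sum _ _ _) _.
have -> : (k * p = \sum_(i < k) p)%N by rewrite big_const_ord iter_addn_0 mulnC.
by apply: leq_sum => i _.
Qed.

End KrylovSpaces.

Lemma conjmx_expr (F : fieldType) n (g A : 'M[F]_n) m : g \in unitmx ->
  (g *m A *m invmx g) ^+ m = g *m A ^+ m *m invmx g.
Proof.
move=> g_unit; elim: m => [|m IHm]; first by rewrite !expr0 mulmx1 mulmxV.
rewrite !exprS IHm -!mulmxE !mulmxA -[g *m A *m invmx g *m g]mulmxA mulVmx //.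
by rewrite mulmx1.
Qed.

Lemma dim_kX_sum_conj (F : fieldType) n (g A : 'M[F]_n) k z (nu : 'I_k -> 'cV[F]_n) :
  g \in unitmx ->
  \dim (kX_sum (g *m A *m invmx g) (g *m z) (fun i => g *m nu i)) = \dim (kX_sum A z nu).
Proof.
move=> g_unit; pose f := linfun (mulmx g : 'cV[F]_n -> 'cV[F]_n).
have kX_conj y : kX_span (g *m A *m invmx g) (g *m y) = (f @: kX_span A y)%VS.
  rewrite /kX_span limg_span -map_comp; congr span; apply: eq_map => m /=.
  by rewrite lfunE /= conjmx_expr // -!mulmxA mulKmx.
have f_inj : lker f == 0%VS.
  by apply/lker0P => x y; rewrite !lfunE /= => /(congr1 (mulmx (invmx g))); rewrite !mulKmx.
rewrite /kX_sum kX_conj (eq_bigr _ (fun i _ => kX_conj (nu i))) -limg_sum -limgD.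
by rewrite limg_dim_eq // (eqP f_inj) capv0.
Qed.

Section JordanBasis.
Variables (F : fieldType) (n : nat) (X : 'M[F]_n) (lam : seq nat) (v : nat -> 'cV[F]_n).
Hypothesis jordan : is_jordan_basis X lam v.

Local Notation a := (lam_a lam).
Local Notation t := (size lam).

Definition jordan_sub (sel : nat -> nat -> bool) : seq 'cV[F]_n :=
  flatten [seq [seq X ^+ l *m v i | l <- iota 0 (a i) & sel i l] | i <- iota 1 t].

Lemma free_jordan_sub sel : free (jordan_sub sel).
Proof.
apply: free_subseq (basis_free jordan.1) _.
by apply: subseq_flatten_map => i; apply/map_subseq/filter_subseq.
Qed.

Lemma dim_jordan_sub sel : \dim <<jordan_sub sel>> = size (jordan_sub sel).
Proof. exact/eqP/free_jordan_sub. Qed.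

Lemma size_jordan_sub sel :
  size (jordan_sub sel) = (\sum_(1 <= i < t.+1) count (sel i) (iota 0 (a i)))%N.
Proof.
rewrite size_flatten sumnE /shape -map_comp big_map /index_iota subn1.
by apply: eq_bigr => i _; rewrite /= size_map size_filter.
Qed.

Lemma size_jordan_blocks (P : pred nat) :
  size (jordan_sub (fun i _ => P i)) = (\sum_(1 <= i < t.+1 | P i) a i)%N.
Proof.
rewrite size_jordan_sub [RHS]big_mkcond; apply: eq_bigr => i _.
by case: (P i); rewrite ?count_predT ?size_iota ?count_pred0.
Qed.

Lemma jordan_sub_spanP (sel : nat -> nat -> bool) (U : {vspace 'cV[F]_n}) :
  (forall i l, (0 < i <= t)%N -> (l < a i)%N -> sel i l -> X ^+ l *m v i \in U) ->
  (<<jordan_sub sel>> <= U)%VS.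
Proof.
move=> selU; apply/span_subvP => _ /flattenP[_ /mapP[i + ->] /mapP[l + ->]].
by rewrite mem_iota mem_filter mem_iota => i_t /andP[sel_il l_a]; apply: selU => //; lia.
Qed.

Lemma mem_jordan_sub (sel : nat -> nat -> bool) i l :
  (0 < i <= t)%N -> (l < a i)%N -> sel i l -> X ^+ l *m v i \in jordan_sub sel.
Proof.
move=> i_t l_a sel_il; apply/flattenP.
exists [seq X ^+ l *m v i | l <- iota 0 (a i) & sel i l].
  by apply/map_f; rewrite mem_iota; lia.
by apply/map_f; rewrite mem_filter sel_il mem_iota.
Qed.

Lemma jordan_expr_eq0 i m : (0 < i <= t)%N -> (a i <= m)%N -> X ^+ m *m v i = 0.
Proof. by move=> i_t /subnK <-; rewrite exprD -mulmxA jordan.2 ?mulmx0. Qed.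

Lemma lam_a_le_dim i : (0 < i <= t)%N -> (a i <= n)%N.
Proof.
move=> i_t; have := dimvS (subvf <<jordan_sub (fun j _ => j == i)>>).
by rewrite dimvf dim_jordan_sub size_jordan_blocks big_nat1_eq ltnS i_t /dim /= muln1.
Qed.

Lemma jordan_tail_mem p m (z : 'cV[F]_n) :
  (p <= m)%N -> X ^+ m *m z \in <<jordan_sub (fun _ l => (p <= l)%N)>>%VS.
Proof.
move=> le_pm; pose f := linfun (mulmx (X ^+ m) : 'cV[F]_n -> 'cV[F]_n).
have -> : X ^+ m *m z = f z by rewrite lfunE.
have z_full : z \in <<jordan_seq X lam v>>%VS by rewrite (span_basis jordan.1) memvf.
apply: subvP (memv_img f z_full); rewrite limg_span; apply/span_subvP => _ /mapP[b b_B ->].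
move: b_B => /flattenP[_ /mapP[i i_t ->] /mapP[l l_a ->]].
rewrite lfunE /= mulmxA mulmxE -exprD.
move: i_t l_a; rewrite !mem_iota /= => i_t l_a.
have [lt_ml | le_ml] := ltnP (m + l) (a i); last by rewrite jordan_expr_eq0 ?mem0v //; lia.
by apply/memv_span/mem_jordan_sub => //; lia.
Qed.

Lemma dim_jordan_tail p :
  \dim <<jordan_sub (fun _ l => (p <= l)%N)>> = (\sum_(1 <= i < t.+1) (a i - p))%N.
Proof.
by rewrite dim_jordan_sub size_jordan_sub; apply: eq_bigr => i _; rewrite count_leq_iota.
Qed.

Definition jordan_gen m : 'cV[F]_n := if (m <= t)%N then v m else 0.

Lemma jordan_gen_expr_eq0 m l : (0 < m)%N -> (a m <= l)%N -> X ^+ l *m jordan_gen m = 0.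
Proof.
rewrite /jordan_gen; case: ifP => [le_mt m_gt0 | _ _ _]; last by rewrite mulmx0.
by apply: jordan_expr_eq0; rewrite m_gt0.
Qed.

Lemma jordan_gen_expr_mem m i l : (0 < m)%N -> m != i ->
  X ^+ l *m jordan_gen m \in <<jordan_sub (fun j _ => j != i)>>%VS.
Proof.
move=> m_gt0 neq_mi; have [lt_la | le_al] := ltnP l (a m); last first.
  by rewrite jordan_gen_expr_eq0 ?mem0v.
rewrite /jordan_gen; case: ifP => [le_mt|_]; last by rewrite mulmx0 mem0v.
by apply/memv_span/mem_jordan_sub; rewrite ?m_gt0.
Qed.

Lemma u_vecE j : u_vec lam v j = jordan_gen (u_index lam j).
Proof.
rewrite /u_vec /u_index /jordan_gen; case: ifP => le_jr; last by rewrite ltnn.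
by rewrite lam_s_le_size.
Qed.

Hypothesis lam_partition : is_partition lam.

Lemma dim_kX_sum_jordan_le k p' w (nu : 'I_k -> 'cV[F]_n) : (k <= t)%N ->
  (forall m, (p' <= m)%N -> X ^+ m *m w \in <<jordan_sub (fun _ l => (a k.+1 <= l)%N)>>%VS) ->
  (\dim (kX_sum X w nu) <= \sum_(1 <= i < k.+1) a i + p')%N.
Proof.
move=> le_kt wU.
apply: leq_trans (dim_kX_sum_le wU (fun i m le_pm => jordan_tail_mem (nu i) le_pm)) _.
by rewrite dim_jordan_tail -(sum_lam_a_excess lam_partition le_kt); lia.
Qed.

Lemma dim_kX_sum_jordan_ge k m :
  (k <= t)%N -> (0 < m)%N -> ((k.+1 < m)%N -> a m = a k.+1) ->
  exists nu : 'I_k -> 'cV[F]_n,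
    (\sum_(1 <= i < k.+2) a i <= \dim (kX_sum X (jordan_gen m) nu))%N.
Proof.
move=> le_kt m_gt0 a_m; pose M := maxn m k.+1.
(* the nu_x enumerate the blocks 1, ..., k+1 other than m *)
pose nu (x : 'I_k) := v (if (x.+1 < m)%N then x.+1 else x.+2); exists nu.
have sub : (<<jordan_sub (fun i _ => (i < k.+1)%N || (i == M))>>
             <= kX_sum X (jordan_gen m) nu)%VS.
  apply: jordan_sub_spanP => i l i_t l_a sel_i.
  have lt_ln : (l < n)%N := leq_trans l_a (lam_a_le_dim i_t).
  have [lt_im | lt_mi | <-] := ltngtP i m.
  - have lt_ik : (i.-1 < k)%N by rewrite /M in sel_i; lia.
    suff -> : v i = nu (Ordinal lt_ik) by apply: mem_kX_sumnu.
    by rewrite /nu /= prednK ?lt_im //; case/andP: i_t.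
  - have lt_ik : (i.-2 < k)%N by rewrite /M in sel_i; lia.
    suff -> : v i = nu (Ordinal lt_ik) by apply: mem_kX_sumnu.
    by rewrite /nu /= ifN; [congr v | ]; lia.
  - suff -> : v i = jordan_gen i by apply: mem_kX_sumw.
    by rewrite /jordan_gen; case/andP: i_t => _ ->.
apply: leq_trans (dimvS sub); rewrite dim_jordan_sub size_jordan_blocks.
rewrite sum_lam_a_prefix_add ?leq_maxr // big_nat_recr //= /M.
by case: (ltnP k.+1 m) => [/a_m <- | _].
Qed.

Lemma dim_kX_sum_jordan_ge_enh k m : (k < t)%N -> (0 < m)%N -> m != k.+1 ->
  (\sum_(1 <= i < k.+1) a i + (a k.+1 - 1) <=
   \dim (kX_sum X (jordan_gen m + X *m v k.+1) (fun x : 'I_k => v x.+1)))%N.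
Proof.
move=> lt_kt m_gt0 neq_mk.
set M := kX_sum _ _ _; set V := <<jordan_sub (fun i _ => i != k.+1)>>%VS.
have kt : (0 < k.+1 <= t)%N by [].
have N_sub : (<<jordan_sub (fun i _ => (i < k.+1)%N)>> <= M :&: V)%VS.
  rewrite subv_cap; apply/andP; split; apply: jordan_sub_spanP => i l i_t l_a lt_ik.
    have lt_ik' : (i.-1 < k)%N by lia.
    have lt_ln : (l < n)%N := leq_trans l_a (lam_a_le_dim i_t).
    suff -> : v i = v (Ordinal lt_ik').+1 by apply: mem_kX_sumnu.
    by rewrite /= prednK //; case/andP: i_t.
  by apply/memv_span/mem_jordan_sub; rewrite // neq_ltn lt_ik.
have W_sub : (<<jordan_sub (fun i l => (i != k.+1) || (0 < l)%N)>> <= M + V)%VS.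
  apply: jordan_sub_spanP => i l i_t l_a sel_il.
  have [eq_ik | neq_ik] := eqVneq i k.+1; last first.
    by apply/(subvP (addvSr _ _))/memv_span/mem_jordan_sub; rewrite ?neq_ik.
  move: sel_il l_a; rewrite eq_ik eqxx /=; case: l => // l _ lt_la.
  have lt_ln : (l < n)%N by have := lam_a_le_dim kt; lia.
  have -> : X ^+ l.+1 *m v k.+1
            = X ^+ l *m (jordan_gen m + X *m v k.+1) - X ^+ l *m jordan_gen m.
    by rewrite mulmxDr addrAC subrr add0r mulmx_exprSr.
  apply: memvB; first by apply/(subvP (addvSl _ _))/mem_kX_sumw.
  by apply/(subvP (addvSr _ _))/jordan_gen_expr_mem.
have size_W : size (jordan_sub (fun i l => (i != k.+1) || (0 < l)%N)) =
              (size (jordan_sub (fun i _ => i != k.+1)) + (a k.+1 - 1))%N.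
  have -> : (a k.+1 - 1 = \sum_(1 <= i < t.+1 | i == k.+1) (a i - 1))%N.
    by rewrite big_nat1_eq kt.
  rewrite !size_jordan_sub [X in (_ + X)%N]big_mkcond -big_split; apply: eq_bigr => i _ /=.
  case: eqP => [->|_] /=; last by rewrite addn0.
  by rewrite (@eq_count _ _ (leq 1)) // count_leq_iota (@eq_count _ _ pred0) ?count_pred0.
have := leq_add (dimvS W_sub) (dimvS N_sub); rewrite dimv_sum_cap.
rewrite !dim_jordan_sub size_W !size_jordan_blocks sum_lam_a_prefix.
by set d := \dim M; lia.
Qed.

Lemma dim_kX_sum_jordan_max q j k : enhanced_index lam q j -> (k <= t)%N ->
  (forall y (nu : 'I_k -> 'cV[F]_n),
     (\dim (kX_sum X (u_vec lam v j + X *m y) nu) <= enh_num lam q k)%N) /\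
  (exists y (nu : 'I_k -> 'cV[F]_n),
     \dim (kX_sum X (u_vec lam v j + X *m y) nu) = enh_num lam q k).
Proof.
move=> qj le_kt; rewrite u_vecE; set m := u_index lam j.
have /andP[lt_qm le_mt] := u_index_bounds lam_partition qj.
have upper y (nu : 'I_k -> 'cV[F]_n) :
    (\dim (kX_sum X (jordan_gen m + X *m y) nu) <= enh_num lam q k)%N.
  rewrite /enh_num; apply: dim_kX_sum_jordan_le => // l le_l.
  rewrite mulmxDr mulmx_exprSr; apply: memvD; last first.
    by apply: jordan_tail_mem; move: le_l; case: ifP; lia.
  move: le_l; case: ifP => [_|/negbT le_kq] le_l; first exact: jordan_tail_mem.
  have := lam_a_u_index_lt lam_partition qj (i := k.+1); rewrite -/m => lt_am.
  by rewrite jordan_gen_expr_eq0 ?mem0v //; [lia | move: lt_am; rewrite ltnNge in le_kq; lia].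
split=> //; have [lt_qk | le_kq] := ltnP q k.+1.
  have a_m : (k.+1 < m)%N -> a m = a k.+1.
    by move=> lt_km; rewrite (lam_a_u_index_eq lam_partition qj (i := k.+1)) //; lia.
  have [nu ge_nu] := dim_kX_sum_jordan_ge le_kt (leq_ltn_trans (leq0n q) lt_qm) a_m.
  exists 0, nu; apply/eqP; rewrite eqn_leq upper mulmx0 addr0.
  by rewrite /enh_num lt_qk -big_nat_recr.
have lt_am : (a m < a k.+1)%N := lam_a_u_index_lt lam_partition qj (i := k.+1) le_kq.
exists (v k.+1), (fun x => v x.+1); apply/eqP; rewrite eqn_leq upper /enh_num ltnNge le_kq /=.
by apply: dim_kX_sum_jordan_ge_enh; lia.
Qed.

End JordanBasis.

Theorem lemma3p9 (F : closedFieldType) (n : nat) (lam : seq nat) (q : nat)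
  (X : 'M[F]_n) (w : 'cV[F]_n)
  (Hlam : is_partition lam) (Horb : in_enh_orbit lam q X w)
  (k : nat) (Hk : (k <= size lam)%N) :
  (forall (y : 'cV[F]_n) (nu : 'I_k -> 'cV[F]_n),
     (\dim (kX_span X (w + X *m y) + \sum_(i < k) kX_span X (nu i))%VS
        <= enh_num lam q k)%N) /\
  (exists (y : 'cV[F]_n) (nu : 'I_k -> 'cV[F]_n),
     \dim (kX_span X (w + X *m y) + \sum_(i < k) kX_span X (nu i))%VS
        = enh_num lam q k).
Proof.
case: Horb => X0 [v0 [j [g [v [jordan qj g_unit [-> ->]]]]]].
set u := u_vec lam v0 j.
have shift y : - (g *m X0 *m invmx g *m v) + g *m u + g *m X0 *m invmx g *m y
               = g *m (u + X0 *m (invmx g *m (y - v))).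
  by rewrite mulmxDr !mulmxA mulmxBr addrAC addrC [- _ + _]addrC.
have dimE y (nu nu' : 'I_k -> 'cV[F]_n) : (forall i, nu i = g *m nu' i) ->
    \dim (kX_sum (g *m X0 *m invmx g) (g *m (u + X0 *m y)) nu)
    = \dim (kX_sum X0 (u + X0 *m y) nu').
  move=> nuE; rewrite -(@dim_kX_sum_conj _ _ g X0 _ _ nu' g_unit).
  by congr (\dim (_ + _)); apply: eq_bigr => i _; rewrite nuE.
have [upper [y0 [nu0 dim0]]] := dim_kX_sum_jordan_max jordan Hlam qj Hk.
split=> [y nu | ].
  rewrite -[X in \dim X]/(kX_sum _ _ nu) shift (dimE _ _ (fun i => invmx g *m nu i)) //.
  by move=> i; rewrite mulKVmx.
exists (v + g *m y0), (fun i => g *m nu0 i).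
by rewrite -[X in \dim X]/(kX_sum _ _ _) shift [v + _]addrC addrK mulKmx // (dimE y0 _ nu0).
Qed.
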